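(* For all $v\in V^X$, the sequence $(\lambda^k(v))_{k\in\mathbb{N}}$ is non-increasing and the sequence of sets $(\Lambda^k(v))_{k\in\mathbb{N}}$ is non-increasing for inclusion.
   Context: Let $\mathcal{G}$ be a quantitative reachability game on an arena $G=(\Pi,V,(V_i)_{i\in\Pi},E)$ (finite player set $\Pi$, finite vertex set $V$ with $|V|\ge2$, $|\Pi|\le|V|$, partition $(V_i)$, every vertex has a successor) with targets $F_i\subseteq V$ and costs $\mathrm{Cost}_i(\rho)=$ least $k$ with $\rho_k\in F_i$ (or $+\infty$); $v_0\in V$. Extended game: arena $X$ with vertices $V^X=V\times2^\Pi$, edges $((v,I),(v',I'))\in E^X$ iff $(v,v')\in E$ and $I'=I\cup\{i:v'\in F_i\}$, $(v,I)\in V^X_i$ iff $v\in V_i$, targets $F^X_i=\{(v,I):i\in I\}$ with corresponding reachability costs $\mathrm{Cost}_i$; $x_0=(v_0,\{i:v_0\in F_i\})$. $I(u)$ is the second component of $u$. $\mathcal{I}$ is the set of $I$ with some $(v,I)$ reachable from $x_0$, $N=|\mathcal{I}|$, $J_1<\dots<J_N$ a fixed total order of $\mathcal{I}$ extending $I<I'$ iff $I\ne I'$ and some $(v',I')$ is reachable from some $(v,I)$. $V^{\ge J_n}=\{(v,J_m):v\in V,m\ge n\}$. Labelings: for $\lambda:V^X\to\mathbb{N}\cup\{+\infty\}$, a play $\rho$ of $X$ is $\lambda$-consistent if $\mathrm{Cost}_i(\rho_{\ge n})\le\lambda(\rho_n)$ for all $n$ and $i$ with $\rho_n\in V^X_i$.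 $\lambda^0(u)=0$ if $u\in V^X_i$ and $i\in I(u)$, else $+\infty$. The update of $\lambda^k$ w.r.t. $V^{\ge J_n}$ keeps values outside $V^{\ge J_n}$ and for $u\in V^{\ge J_n}\cap V^X_i$ sets $\lambda^{k+1}(u)=0$ if $i\in I(u)$, otherwise $1+\min_{(u,u')\in E^X}\sup\{\mathrm{Cost}_i(\rho):\rho\in\Lambda^k(u')\}$ ($1+(+\infty)=+\infty$). The sequence is generated by $n_0=N$, $\lambda^{k+1}=$ update of $\lambda^k$ w.r.t. $V^{\ge J_{n_k}}$, $n_{k+1}=n_k-1$ if $\lambda^{k+1}=\lambda^k$ and $n_k>1$, else $n_{k+1}=n_k$. $\Lambda^k(v)$ is the set of $\lambda^k$-consistent plays of $X$ from $v$. *)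

From Stdlib Require Import ClassicalEpsilon.
From mathcomp Require Import all_boot.
Set Implicit Arguments. Unset Strict Implicit. Unset Printing Implicit Defensive.

(* N ∪ {+oo}: Some n = n, None = +oo. *)
Definition ninf := option nat.

Definition ninf_le (x y : ninf) : bool :=
  match y, x with
  | None, _ => true
  | Some _, None => false
  | Some m, Some n => n <= m
  end.

Definition ninf_succ (x : ninf) : ninf :=
  match x with Some n => Some n.+1 | None => None end.

Definition ninf_min (x y : ninf) : ninf := if ninf_le x y then x else y.

(* least upper bound of a set of elements of N ∪ {+oo} (a complete lattice;
   sup of the empty set is 0) *)
Definition is_lub_ninf (S : ninf -> Prop) (s : ninf) : Prop :=
  (forall x, S x -> ninf_le x s) /\
  (forall b, (forall x, S x -> ninf_le x b) -> ninf_le s b).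

Definition sup_ninf (S : ninf -> Prop) : ninf :=
  epsilon (inhabits None) (is_lub_ninf S).

Section ExtendedGame.
Variables (P V : finType) (owner : V -> P) (E : rel V) (F : P -> {set V})
          (J : seq {set P}).

Definition XV : finType := (V * {set P})%type.

Definition EX : rel XV :=
  fun x y => E x.1 y.1 && (y.2 == x.2 :|: [set i | y.1 \in F i]).

Definition x0 (v0 : V) : XV := (v0, [set i | v0 \in F i]).

Definition ownX (u : XV) : P := owner u.1.

Definition play (rho : nat -> XV) : Prop := forall n, EX (rho n) (rho n.+1).

Definition suffix (rho : nat -> XV) (n : nat) : nat -> XV := fun k => rho (n + k).

Definition cost (i : P) (rho : nat -> XV) : ninf :=
  match excluded_middle_informative (exists k, (fun k => i \in (rho k).2) k) with
  | left h => Some (ex_minn h)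
  | right _ => None
  end.

Definition consistent (lam : XV -> ninf) (rho : nat -> XV) : Prop :=
  play rho /\
  forall n i, ownX (rho n) = i -> ninf_le (cost i (suffix rho n)) (lam (rho n)).

Definition Lambda (lam : XV -> ninf) (u : XV) : (nat -> XV) -> Prop :=
  fun rho => rho 0 = u /\ consistent lam rho.

Definition lam0 : XV -> ninf :=
  fun u => if ownX u \in u.2 then Some 0 else None.

(* V^{>= J_n} (J_1 < ... < J_N is the 1-indexed list J) *)
Definition inVge (n : nat) (u : XV) : bool :=
  [exists m : 'I_(size J), (n <= m.+1) && (u.2 == nth set0 J m)].

Definition update (lam : XV -> ninf) (n : nat) : XV -> ninf :=
  fun u =>
    if inVge n u then
      if ownX u \in u.2 then Some 0
      else ninf_succ (\big[ninf_min/None]_(u' | EX u u')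
                        sup_ninf (fun c => exists rho, Lambda lam u' rho /\
                                                       c = cost (ownX u) rho))
    else lam u.

Definition step (st : (XV -> ninf) * nat) : (XV -> ninf) * nat :=
  let: (lam, n) := st in
  let lam' := update lam n in
  (lam', if [forall u, lam' u == lam u] && (1 < n) then n.-1 else n).

Definition state (k : nat) : (XV -> ninf) * nat := iter k step (lam0, size J).

Definition lamk (k : nat) : XV -> ninf := (state k).1.

Definition Lambdak (k : nat) (u : XV) : (nat -> XV) -> Prop := Lambda (lamk k) u.

End ExtendedGame.

(* Every label lambda^k(u) is either lambda^0(u) or the value that the update
   computed at u from some earlier labeling lambda^j.  That value is monotone in
   the labeling, since a larger labeling admits more consistent plays and hence
   a larger supremum of costs, and lambda^0(u) dominates it, being 0 exactly
   where the update also gives 0 and +oo elsewhere.  Strong induction on k then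
   yields lambda^(k+1) <= lambda^k, and the sets Lambda^k shrink because
   consistency with a labeling implies consistency with any larger one.
   None of the hypotheses on the arena or on the order J_1 < ... < J_N is used:
   monotonicity holds for any list of sets to update along. *)
From Stdlib Require Import ClassicalEpsilon.
From mathcomp Require Import all_boot.

Set Implicit Arguments.
Unset Strict Implicit.
Unset Printing Implicit Defensive.

Lemma ninf_le_refl x : ninf_le x x.
Proof. by case: x => /=. Qed.

Lemma ninf_le_trans x y z : ninf_le x y -> ninf_le y z -> ninf_le x z.
Proof. by case: z => [c|] //; case: y => [b|] //; case: x => [a|] //=; apply: leq_trans. Qed.

Lemma ninf_le_total x y : ninf_le x y || ninf_le y x.
Proof. by case: x => [a|]; case: y => [b|] //=; apply: leq_total. Qed.

Lemma ninf_le0 x : ninf_le (Some 0) x.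
Proof. by case: x. Qed.

Lemma ninf_succ_mono x y : ninf_le x y -> ninf_le (ninf_succ x) (ninf_succ y).
Proof. by case: y => [b|] //; case: x => [a|]. Qed.

Lemma ninf_min_lel x y : ninf_le (ninf_min x y) x.
Proof.
rewrite /ninf_min; case: ifP => [_|xy]; first exact: ninf_le_refl.
by have := ninf_le_total x y; rewrite xy.
Qed.

Lemma ninf_min_ler x y : ninf_le (ninf_min x y) y.
Proof. by rewrite /ninf_min; case: ifP => // _; apply: ninf_le_refl. Qed.

Lemma ninf_le_min z x y : ninf_le z x -> ninf_le z y -> ninf_le z (ninf_min x y).
Proof. by rewrite /ninf_min; case: ifP. Qed.

Lemma ninf_min_mono x1 x2 y1 y2 : ninf_le x1 x2 -> ninf_le y1 y2 ->
  ninf_le (ninf_min x1 y1) (ninf_min x2 y2).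
Proof.
move=> le_x le_y; apply: ninf_le_min.
- exact: ninf_le_trans (ninf_min_lel _ _) le_x.
- exact: ninf_le_trans (ninf_min_ler _ _) le_y.
Qed.

Lemma lub_ninf_bounded (S : ninf -> Prop) b :
  (forall x, S x -> ninf_le x (Some b)) -> exists s, is_lub_ninf S s.
Proof.
elim: b => [|b IHb] Sb.
  by exists (Some 0); split=> // s _; apply: ninf_le0.
have [Sb1|nSb1] := classic (S (Some b.+1)).
  by exists (Some b.+1); split=> // s Ss; apply: Ss.
apply: IHb => -[a|] Sx; have /= := Sb _ Sx => //.
by rewrite leq_eqVlt => /orP[/eqP eq_a|//]; rewrite eq_a in Sx.
Qed.

Lemma lub_ninf_exists (S : ninf -> Prop) : exists s, is_lub_ninf S s.
Proof.
have [[b Sb]|unbounded] := classic (exists b, forall x, S x -> ninf_le x (Some b)).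
  exact: lub_ninf_bounded Sb.
exists None; split=> // -[b|] Sb //.
by case: unbounded; exists b.
Qed.

Lemma sup_ninfP S : is_lub_ninf S (sup_ninf S).
Proof. exact: epsilon_spec (lub_ninf_exists S). Qed.

Lemma sup_ninf_mono (S T : ninf -> Prop) : (forall x, S x -> T x) ->
  ninf_le (sup_ninf S) (sup_ninf T).
Proof.
move=> ST; have [_ leastS] := sup_ninfP S; have [ubT _] := sup_ninfP T.
by apply: leastS => x /ST; apply: ubT.
Qed.

Section Labelings.
Variables (P V : finType) (owner : V -> P) (E : rel V) (F : P -> {set V})
          (J : seq {set P}).

Local Notation XV := (XV P V).
Local Notation Lambda := (Lambda owner E F).
Local Notation lamk := (lamk owner E F J).
Local Notation update := (update owner E F J).

Definition label_le (l1 l2 : XV -> ninf) := forall u, ninf_le (l1 u) (l2 u).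

Lemma label_le_refl l : label_le l l.
Proof. by move=> u; apply: ninf_le_refl. Qed.

Lemma label_le_trans l1 l2 l3 : label_le l1 l2 -> label_le l2 l3 -> label_le l1 l3.
Proof. by move=> l12 l23 u; apply: ninf_le_trans (l12 u) (l23 u). Qed.

Lemma Lambda_mono l1 l2 u rho : label_le l1 l2 -> Lambda l1 u rho -> Lambda l2 u rho.
Proof.
move=> l12 [rho0 [play_rho cons_rho]]; split=> //; split=> // n i own_i.
exact: ninf_le_trans (cons_rho n i own_i) (l12 _).
Qed.

Definition update_value (lam : XV -> ninf) (u : XV) : ninf :=
  if ownX owner u \in u.2 then Some 0
  else ninf_succ (\big[ninf_min/None]_(u' | EX E F u u')
                    sup_ninf (fun c => exists rho, Lambda lam u' rho /\
                                                   c = cost (ownX owner u) rho)).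

Lemma updateE lam n u :
  update lam n u = if inVge J n u then update_value lam u else lam u.
Proof. by []. Qed.

Lemma update_value_mono l1 l2 : label_le l1 l2 ->
  label_le (update_value l1) (update_value l2).
Proof.
move=> l12 u; rewrite /update_value; case: ifP => _; first exact: ninf_le_refl.
apply/ninf_succ_mono/(big_ind2 (fun a b => ninf_le a b)) => //.
- exact: ninf_min_mono.
- move=> u' _; apply: sup_ninf_mono => c [rho [Lrho ->]].
  by exists rho; split=> //; apply: Lambda_mono Lrho.
Qed.

Lemma update_value_le_lam0 l : label_le (update_value l) (lam0 owner).
Proof. by move=> u; rewrite /update_value /lam0; case: ifP => // _; apply: ninf_le_refl. Qed.

Lemma lamkS k : exists n, lamk k.+1 = update (lamk k) n.
Proof. by rewrite /lamk /state iterS; case: (iter k _ _) => lam n; exists n. Qed.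

Lemma lamk_last_update k u :
  lamk k u = lam0 owner u \/ exists2 j, j < k & lamk k u = update_value (lamk j) u.
Proof.
elim: k => [|k IHk]; first by left.
have [n ->] := lamkS k; rewrite updateE; case: ifP => _; first by right; exists k.
case: IHk => [|[j lt_jk ->]]; first by left.
by right; exists j; first exact: ltnW.
Qed.

Lemma lamkS_le k : label_le (lamk k.+1) (lamk k).
Proof.
elim/ltn_ind: k => k IHk.
have chain : {in [pred i | i <= k] &, {homo lamk : i j / i <= j >-> label_le j i}}.
  apply: homo_leq_in.
  - exact: label_le_refl.
  - by move=> l2 l1 l3 l21 l32; apply: label_le_trans l32 l21.
  - by move=> i j' _ le_j'k m /andP[_ lt_mj']; rewrite inE ltnW ?(leq_trans lt_mj').
  - by move=> i _; rewrite inE => /IHk.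
move=> u; have [n ->] := lamkS k; rewrite updateE; case: ifP => _; last exact: ninf_le_refl.
case: (lamk_last_update k u) => [->|[j lt_jk ->]]; first exact: update_value_le_lam0.
by apply/update_value_mono/chain; rewrite ?inE ?leqnn ?(ltnW lt_jk).
Qed.

Lemma lamk_nonincreasing k k' : k <= k' -> label_le (lamk k') (lamk k).
Proof.
apply: (@homo_leq _ lamk (fun l1 l2 => label_le l2 l1)) => [l|l2 l1 l3 l21 l32|i].
- exact: label_le_refl.
- exact: label_le_trans l32 l21.
- exact: lamkS_le.
Qed.

End Labelings.

Theorem lemma2p9
  (P V : finType) (owner : V -> P) (E : rel V) (F : P -> {set V}) (v0 : V)
  (J : seq {set P})
  (hV : 2 <= #|V|) (hP : #|P| <= #|V|)
  (hsucc : forall v, exists v', E v v')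
  (hJuniq : uniq J)
  (hJreach : forall I, I \in J <-> exists v, connect (EX E F) (x0 F v0) (v, I))
  (hJorder : forall I I', I \in J -> I' \in J -> I != I' ->
               (exists v v', connect (EX E F) (v, I) (v', I')) ->
               index I J < index I' J) :
  forall (v : XV P V) (k k' : nat), k <= k' ->
    ninf_le (lamk owner E F J k' v) (lamk owner E F J k v) /\
    (forall rho, Lambdak owner E F J k' v rho -> Lambdak owner E F J k v rho).
Proof.
move=> v k k' le_kk'; have le_lam := lamk_nonincreasing owner E F J le_kk'.
by split=> [|rho]; [apply: le_lam | apply: Lambda_mono].
Qed.
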